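(* Let $k\in\mathbb{N}$ with $\gcd(k,6)=1$, let $h$ be an integer with $\gcd(h,k)=1$, and let $h'$ be an integer with $hh'\equiv-1\pmod{k}$ and $6\mid h'$. Then $$\frac{\omega_{6h,k}\,\omega_{2h,k}\,\omega_{h,k}}{\omega_{3h,k}}=\exp\!\left(- \frac{2\pi i}{36k} \left(-9k+9k^2+h (-9+9k^2) + h'(2-2k^2) \right)\right)$$ and $$\frac{\omega_{3h,k}\,\omega_{2h,k}\,\omega_{h,k}}{\omega_{6h,k}^3} =\exp\!\left(\frac{2\pi i}{18k} \left(9h ( k^2-1) + h'(k^2-1) \right)\right).$$
   Context: For coprime integers $h$ and $K\ge1$, $\omega_{h,K}=\exp(\pi i\, s(h,K))$, where $s(h,K)=\sum_{r=1}^{K-1}\frac{r}{K}\left(\frac{hr}{K}-\lfloor \frac{hr}{K}\rfloor-\frac12\right)$ is the Dedekind sum (the multiplier of the Dedekind eta function). *)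

From Stdlib Require Import Reals ZArith List.
From Coquelicot Require Export Coquelicot.
Export ListNotations.

Open Scope R_scope.

Definition cexpi (t : R) : C := (cos t, sin t).

(* floor: Stdlib's Int_part x = up x - 1 is the floor of x *)
Definition Rfloor (x : R) : Z := Int_part x.

Definition dedekind_s (h : Z) (K : nat) : R :=
  fold_right Rplus 0
    (map (fun r : nat =>
            (INR r / INR K) *
            (IZR h * INR r / INR K - IZR (Rfloor (IZR h * INR r / INR K)) - 1 / 2))
         (seq 1 (K - 1))).

Definition omega (h : Z) (K : nat) : C := cexpi (PI * dedekind_s h K).

From Stdlib Require Import Reals ZArith.
From Coquelicot Require Import Coquelicot.
From Stdlib Require Import List Lia Lra Permutation Znumtheory.

(* Write T(a) = sum_{x=1}^{k-1} x (a x mod k), so that s(a,k) = T(a)/k^2 - (k-1)/4. Each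
   identity then says that the two arguments differ by 2 pi times an integer, i.e. that an
   integer combination of T(6h), T(2h), T(h), T(3h) is divisible by 36 k^2, resp. 18 k^2.

   Modulo k^2: since multiplication by a unit permutes the nonzero residues,
   sum (a x mod k)^2 = sum x^2, and expanding a x mod k = a x - k floor(a x / k) gives
   12 a T(a) = (1 + a^2) k (k-1) (2k-1) (mod k^2); after multiplying by the unit 72 h the
   relation h h' = -1 (mod k) makes everything cancel.

   Modulo 36, resp. 18: as 24 | k^2 - 1 and 6 | h', it remains to see that
   T(6h) + T(2h) + T(h) + T(3h) is even. With y = h x mod k the summand
   x (6y mod k + 2y mod k + y + 3y mod k) has the parity of x [k < 6y < 5k], and the
   reflection x -> k - x shows that twice the sum of the latter is k times
   #{y | k < 6y < 5k}, a multiple of 4. *)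

Open Scope Z_scope.

Definition sumZ (f : Z -> Z) (l : list Z) : Z :=
  fold_right (fun x acc => f x + acc) 0 l.

Lemma sumZ_cons f x l : sumZ f (x :: l) = f x + sumZ f l.
Proof. reflexivity. Qed.

Lemma sumZ_app f l l' : sumZ f (l ++ l') = sumZ f l + sumZ f l'.
Proof. induction l; simpl; lia. Qed.

Lemma sumZ_map f g l : sumZ f (map g l) = sumZ (fun x => f (g x)) l.
Proof. induction l; simpl; congruence. Qed.

Lemma sumZ_ext f g l : (forall x, In x l -> f x = g x) -> sumZ f l = sumZ g l.
Proof. induction l; simpl; intros H; auto. rewrite H, IHl; auto. Qed.

Lemma sumZ_perm f l l' : Permutation l l' -> sumZ f l = sumZ f l'.
Proof. induction 1; simpl; lia. Qed.

Lemma sumZ_add f g l : sumZ (fun x => f x + g x) l = sumZ f l + sumZ g l.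
Proof. induction l; simpl; lia. Qed.

Lemma sumZ_sub f g l : sumZ (fun x => f x - g x) l = sumZ f l - sumZ g l.
Proof. induction l; simpl; lia. Qed.

Lemma sumZ_mul_l c f l : sumZ (fun x => c * f x) l = c * sumZ f l.
Proof. induction l; simpl; [ring|]. rewrite IHl; ring. Qed.

Lemma sumZ_divide d f l : (forall x, In x l -> (d | f x)) -> (d | sumZ f l).
Proof.
  induction l; simpl; intros H; [apply Z.divide_0_r|].
  apply Z.divide_add_r; auto.
Qed.

Definition nonzero_residues (K : Z) : list Z := map Z.of_nat (seq 1 (Z.to_nat K - 1)).

Lemma in_nonzero_residues K x : In x (nonzero_residues K) <-> 1 <= x <= K - 1.
Proof.
  unfold nonzero_residues. rewrite in_map_iff. split.
  - intros [n [<- Hn]]. apply in_seq in Hn. lia.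
  - intros H. exists (Z.to_nat x). rewrite in_seq. lia.
Qed.

Lemma sumZ_seq_succ f n :
  sumZ f (map Z.of_nat (seq 1 (S n))) = sumZ f (map Z.of_nat (seq 1 n)) + f (Z.of_nat (S n)).
Proof. rewrite seq_S, map_app, sumZ_app. simpl. ring. Qed.

Lemma sum_nonzero_residues K : 1 <= K ->
  2 * sumZ (fun x => x) (nonzero_residues K) = (K - 1) * K.
Proof.
  intros HK. unfold nonzero_residues.
  replace K with (Z.of_nat (Z.to_nat K - 1) + 1) at 2 3 by lia.
  induction (Z.to_nat K - 1)%nat as [|n IH]; [reflexivity|].
  rewrite sumZ_seq_succ, Z.mul_add_distr_l, IH. lia.
Qed.

Lemma sum_sq_nonzero_residues K : 1 <= K ->
  6 * sumZ (fun x => x * x) (nonzero_residues K) = (K - 1) * K * (2 * K - 1).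
Proof.
  intros HK. unfold nonzero_residues.
  replace K with (Z.of_nat (Z.to_nat K - 1) + 1) at 2 3 4 by lia.
  induction (Z.to_nat K - 1)%nat as [|n IH]; [reflexivity|].
  rewrite sumZ_seq_succ, Z.mul_add_distr_l, IH. lia.
Qed.

Lemma divide_small_eq0 K z : (K | z) -> -K < z < K -> z = 0.
Proof.
  intros Hd Hz. destruct (Z.eq_dec z 0) as [|Hnz]; auto.
  apply Zdivide_bounds in Hd; lia.
Qed.

Section MulByUnit.
Variables K a : Z.
Hypothesis Ha : Z.gcd a K = 1.

Lemma divide_of_divide_mul_unit z : (K | a * z) -> (K | z).
Proof. intros H. apply (Z.gauss _ a); auto. now rewrite Z.gcd_comm. Qed.

Lemma mul_mod_in_nonzero_residues x : 1 <= x <= K - 1 -> 1 <= (a * x) mod K <= K - 1.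
Proof.
  intros Hx. pose proof (Z.mod_pos_bound (a * x) K ltac:(lia)).
  enough ((a * x) mod K <> 0) by lia. intros H0.
  apply Z.mod_divide, divide_of_divide_mul_unit, divide_small_eq0 in H0; lia.
Qed.

Lemma mul_mod_inj x y : 1 <= x <= K - 1 -> 1 <= y <= K - 1 ->
  (a * x) mod K = (a * y) mod K -> x = y.
Proof.
  intros Hx Hy Hxy. enough (x - y = 0) by lia.
  apply (divide_small_eq0 K); [|lia].
  apply divide_of_divide_mul_unit. rewrite Z.mul_sub_distr_l.
  apply Z.mod_divide; [lia|]. now rewrite Zminus_mod, Hxy, Z.sub_diag.
Qed.

Lemma nonzero_residues_mul_perm :
  Permutation (map (fun x => (a * x) mod K) (nonzero_residues K)) (nonzero_residues K).
Proof.
  apply NoDup_Permutation_bis.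
  - apply NoDup_map_NoDup_ForallPairs.
    + intros x y Hx Hy. rewrite in_nonzero_residues in Hx, Hy. now apply mul_mod_inj.
    + apply FinFun.Injective_map_NoDup; [intros ? ? ?; lia | apply seq_NoDup].
  - now rewrite length_map.
  - intros z Hz. apply in_map_iff in Hz as [x [<- Hx]].
    rewrite in_nonzero_residues in Hx |- *. now apply mul_mod_in_nonzero_residues.
Qed.

Lemma sumZ_reindex_mul f :
  sumZ f (nonzero_residues K) = sumZ (fun x => f ((a * x) mod K)) (nonzero_residues K).
Proof.
  rewrite <- (sumZ_map f (fun x => (a * x) mod K)).
  symmetry. apply sumZ_perm, nonzero_residues_mul_perm.
Qed.

End MulByUnit.

Definition dsumZ (K a : Z) : Z := sumZ (fun x => x * ((a * x) mod K)) (nonzero_residues K).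

Lemma dsumZ_identity K a : 1 <= K -> Z.gcd a K = 1 ->
  12 * a * dsumZ K a
  = (1 + a * a) * K * (K - 1) * (2 * K - 1)
    - 6 * K * K * sumZ (fun x => (a * x / K) * (a * x / K)) (nonzero_residues K).
Proof.
  intros HK Ha. unfold dsumZ.
  set (S2 := sumZ (fun x => x * x) (nonzero_residues K)).
  set (F := sumZ (fun x => x * (a * x / K)) (nonzero_residues K)).
  set (Q := sumZ (fun x => (a * x / K) * (a * x / K)) (nonzero_residues K)).
  assert (HS2 := sum_sq_nonzero_residues K HK). fold S2 in HS2.
  assert (HT : sumZ (fun x => x * ((a * x) mod K)) (nonzero_residues K) = a * S2 - K * F).
  { unfold S2, F. rewrite <- !sumZ_mul_l, <- sumZ_sub. apply sumZ_ext. intros x _.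
    rewrite Z.mod_eq by lia. ring. }
  assert (HR : S2 = a * a * S2 - 2 * a * K * F + K * K * Q).
  { unfold S2 at 1. rewrite (sumZ_reindex_mul K a Ha (fun y => y * y)).
    unfold S2, F, Q. rewrite <- !sumZ_mul_l, <- sumZ_sub, <- sumZ_add. apply sumZ_ext. intros x _.
    rewrite Z.mod_eq by lia. ring. }
  rewrite HT. lia.
Qed.

Definition ind_mid (K y : Z) : Z := if andb (K <? 6 * y) (6 * y <? 5 * K) then 1 else 0.

Lemma ind_mid_spec K y :
  (K < 6 * y < 5 * K /\ ind_mid K y = 1) \/ (~ K < 6 * y < 5 * K /\ ind_mid K y = 0).
Proof.
  unfold ind_mid.
  destruct (Z.ltb_spec K (6 * y)), (Z.ltb_spec (6 * y) (5 * K)); cbn [andb]; lia.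
Qed.

Lemma ind_mid_sym K y : ind_mid K (K - y) = ind_mid K y.
Proof.
  destruct (ind_mid_spec K y) as [[? ->]|[? ->]], (ind_mid_spec K (K - y)) as [[? ->]|[? ->]];
    lia.
Qed.

(* With j = floor(6y/K), the floors of 3y/K and 2y/K are floor(j/2) and floor(j/3); as K is
   odd, the sum has the parity of j + floor(j/2) + floor(j/3), which is odd iff 1 <= j <= 4. *)
Lemma mul_mod_sum_parity K y : (K mod 6 = 1 \/ K mod 6 = 5) -> 1 <= y <= K - 1 ->
  (2 | (6 * y) mod K + (2 * y) mod K + y + (3 * y) mod K - ind_mid K y).
Proof.
  intros HK Hy.
  assert (Hfloor : forall c d, 0 < d -> c * d = 6 -> c * y / K = 6 * y / K / d).
  { intros c d Hd Hcd. rewrite Z.div_div, <- (Z.div_mul_cancel_r (c * y) K d) by lia.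
    f_equal. rewrite <- Hcd. ring. }
  rewrite !Z.mod_eq, (Hfloor 3 2), (Hfloor 2 3) by lia.
  set (j := 6 * y / K).
  assert (Hj : K * j <= 6 * y < K * j + K) by (unfold j; Z.div_mod_to_equations; lia).
  assert (Hm : exists m, K = 6 * m + 1 \/ K = 6 * m + 5)
    by (exists (K / 6); Z.div_mod_to_equations; lia).
  destruct Hm as [m Hm]. clearbody j.
  assert (Hs : (2 | j + j / 2 + j / 3 - ind_mid K y)).
  { assert (j = 0 \/ j = 1 \/ j = 2 \/ j = 3 \/ j = 4 \/ j = 5) as Hcases by nia.
    apply Z.mod_divide; [lia|].
    destruct (ind_mid_spec K y) as [[? ->]|[? ->]];
      destruct Hcases as [-> | [-> | [-> | [-> | [-> | ->]]]]]; reflexivity || lia. }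
  assert (Hodd : exists n, K = 2 * n + 1)
    by (destruct Hm; [exists (3 * m) | exists (3 * m + 2)]; lia).
  destruct Hodd as [n Hn], Hs as [p Hp].
  exists (6 * y - n * (j + j / 2 + j / 3) - p - ind_mid K y).
  transitivity (12 * y - K * (j + j / 2 + j / 3) - ind_mid K y); [ring|].
  set (s := j + j / 2 + j / 3) in *. clearbody s. rewrite Hn at 1. lia.
Qed.

Lemma sum_ind_mid_prefix K n : 1 <= K ->
  sumZ (ind_mid K) (map Z.of_nat (seq 1 n))
  = Z.max 0 (Z.min (Z.of_nat n) ((5 * K - 1) / 6) - K / 6).
Proof.
  intros HK. induction n as [|n IH]; [simpl; Z.div_mod_to_equations; lia|].
  rewrite sumZ_seq_succ, IH.
  destruct (ind_mid_spec K (Z.of_nat (S n))) as [[? ->]|[? ->]]; Z.div_mod_to_equations; lia.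
Qed.

Lemma sum_ind_mid_divide4 K : 0 < K -> (K mod 6 = 1 \/ K mod 6 = 5) ->
  (4 | sumZ (ind_mid K) (nonzero_residues K)).
Proof.
  intros HK0 HK.
  unfold nonzero_residues. rewrite sum_ind_mid_prefix by lia.
  apply Z.mod_divide; [lia|]. Z.div_mod_to_equations. lia.
Qed.

Section Parity.
Variables K h : Z.
Hypothesis HK6 : K mod 6 = 1 \/ K mod 6 = 5.
Hypothesis Hh : Z.gcd h K = 1.

Let A := sumZ (fun x => x * ind_mid K ((h * x) mod K)) (nonzero_residues K).

Lemma twice_sum_ind_mid : 2 * A = K * sumZ (ind_mid K) (nonzero_residues K).
Proof.
  assert (Hm1 : Z.gcd (-1) K = 1)
    by (change (-1) with (- (1)); rewrite Z.gcd_opp_l; apply Z.gcd_1_l).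
  rewrite (sumZ_reindex_mul K h Hh), <- sumZ_mul_l.
  transitivity (A + sumZ (fun x => ((-1 * x) mod K) * ind_mid K ((h * ((-1 * x) mod K)) mod K))
                         (nonzero_residues K)).
  { rewrite <- (sumZ_reindex_mul K (-1) Hm1 (fun x => x * ind_mid K ((h * x) mod K))).
    unfold A; ring. }
  unfold A. rewrite <- sumZ_add. apply sumZ_ext. intros x Hx. apply in_nonzero_residues in Hx.
  assert (Hrefl : (-1 * x) mod K = K - x) by (symmetry; apply (Z.mod_unique _ _ (-1)); lia).
  assert (Hhrefl : (h * (K - x)) mod K = K - (h * x) mod K).
  { pose proof (mul_mod_in_nonzero_residues K h Hh x Hx).
    symmetry; apply (Z.mod_unique _ _ (h - 1 - h * x / K)); [lia|].
    rewrite Z.mod_eq by lia. ring. }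
  rewrite Hrefl, Hhrefl, ind_mid_sym. ring.
Qed.

Lemma dsumZ_parity : 0 < K ->
  (2 | dsumZ K (6 * h) + dsumZ K (2 * h) + dsumZ K h + dsumZ K (3 * h)).
Proof.
  intros HK.
  assert (HA : (2 | A)).
  { destruct (sum_ind_mid_divide4 K HK HK6) as [t Ht].
    exists (K * t). pose proof twice_sum_ind_mid. lia. }
  enough (Hdiff : (2 | dsumZ K (6 * h) + dsumZ K (2 * h) + dsumZ K h + dsumZ K (3 * h) - A))
    by (destruct HA as [a Ha], Hdiff as [b Hb]; exists (a + b); lia).
  unfold dsumZ, A. rewrite <- !sumZ_add, <- sumZ_sub. apply sumZ_divide.
  intros x Hx. apply in_nonzero_residues in Hx.
  pose proof (mul_mod_in_nonzero_residues K h Hh x Hx) as Hy.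
  destruct (mul_mod_sum_parity K ((h * x) mod K) HK6 Hy) as [e He].
  exists (x * e). rewrite <- !Z.mul_assoc, <- !(Z.mul_mod_idemp_r _ (h * x)) by lia.
  transitivity (x * ((6 * ((h * x) mod K)) mod K + (2 * ((h * x) mod K)) mod K + (h * x) mod K
                     + (3 * ((h * x) mod K)) mod K - ind_mid K ((h * x) mod K))); [ring|].
  rewrite He. ring.
Qed.

End Parity.

Lemma mod6_of_coprime6 K : Z.gcd K 6 = 1 -> K mod 6 = 1 \/ K mod 6 = 5.
Proof.
  intros HK. rewrite Z.gcd_comm, <- Z.gcd_mod in HK by lia.
  pose proof (Z.mod_pos_bound K 6 ltac:(lia)).
  assert (K mod 6 = 0 \/ K mod 6 = 1 \/ K mod 6 = 2 \/ K mod 6 = 3 \/ K mod 6 = 4 \/ K mod 6 = 5)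
    as [E | [E | [E | [E | [E | E]]]]] by lia; rewrite E in HK; discriminate || auto.
Qed.

Lemma divide24_sq_sub1 K : K mod 6 = 1 \/ K mod 6 = 5 -> (24 | K * K - 1).
Proof.
  intros HK. rewrite (Z.div_mod K 12) by lia. set (p := K / 12).
  assert (K mod 12 = 1 \/ K mod 12 = 5 \/ K mod 12 = 7 \/ K mod 12 = 11)
    as [-> | [-> | [-> | ->]]] by (Z.div_mod_to_equations; lia).
  - exists (6 * p * p + p). ring.
  - exists (6 * p * p + 5 * p + 1). ring.
  - exists (6 * p * p + 7 * p + 2). ring.
  - exists (6 * p * p + 11 * p + 5). ring.
Qed.

Lemma divide_mul_rel_prime a b n : (a | n) -> (b | n) -> rel_prime a b -> (a * b | n).
Proof.
  intros [u ->] Hb Hab. rewrite Z.mul_comm in Hb.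
  destruct (Gauss _ _ _ Hb (rel_prime_sym _ _ Hab)) as [v ->]. exists v. ring.
Qed.

Lemma rel_prime_mult_l a b c : rel_prime a c -> rel_prime b c -> rel_prime (a * b) c.
Proof. intros. now apply rel_prime_sym, rel_prime_mult; apply rel_prime_sym. Qed.

Section Congruences.
Variables K h h' : Z.
Hypothesis HK : 0 < K.
Hypothesis HK6 : Z.gcd K 6 = 1.
Hypothesis Hh : Z.gcd h K = 1.
Hypothesis Hinv : (K | h * h' + 1).
Hypothesis H6 : (6 | h').

Lemma rel_prime_divisor6 a : (a | 6) -> rel_prime a K.
Proof. intros Ha. apply (rel_prime_div 6); auto. apply rel_prime_sym, Zgcd_1_rel_prime, HK6. Qed.

Lemma gcd_divisor6_mul a : (a | 6) -> Z.gcd (a * h) K = 1.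
Proof.
  intros Ha. apply Zgcd_1_rel_prime, rel_prime_mult_l; [now apply rel_prime_divisor6|].
  now apply Zgcd_1_rel_prime.
Qed.

Lemma rel_prime_sq_72h : rel_prime (K * K) (72 * h).
Proof.
  assert (H : rel_prime (72 * h) K).
  { apply rel_prime_mult_l; [|now apply Zgcd_1_rel_prime].
    change 72 with (6 * 6 * 2). repeat apply rel_prime_mult_l; apply rel_prime_divisor6;
      solve [apply Z.divide_refl | exists 3; reflexivity]. }
  apply rel_prime_sym, rel_prime_mult; exact H.
Qed.

Lemma rel_prime_divisor36_sq a : (a | 36) -> rel_prime a (K * K).
Proof.
  intros Ha. apply (rel_prime_div 36); auto.
  assert (H : rel_prime 36 K)
    by (change 36 with (6 * 6); apply rel_prime_mult_l; apply rel_prime_divisor6, Z.divide_refl).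
  apply rel_prime_mult; exact H.
Qed.

Lemma dsumZ_congr a : (a | 6) ->
  (K * K | 12 * (a * h) * dsumZ K (a * h) - (1 + a * h * (a * h)) * K * (K - 1) * (2 * K - 1)).
Proof.
  intros Ha. rewrite dsumZ_identity by (lia || now apply gcd_divisor6_mul).
  set (Q := sumZ _ _). exists (-6 * Q). ring.
Qed.

Lemma first_quotient_congr_sq :
  (K * K | 18 * (dsumZ K (6 * h) + dsumZ K (2 * h) + dsumZ K h - dsumZ K (3 * h))
           + K * (9 * h - 2 * h') * (K * K - 1)).
Proof.
  apply (Gauss _ (72 * h)); [|exact rel_prime_sq_72h].
  destruct Hinv as [m Hm].
  set (C a := 12 * (a * h) * dsumZ K (a * h) - (1 + a * h * (a * h)) * K * (K - 1) * (2 * K - 1)).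
  assert (E : 72 * h * (18 * (dsumZ K (6 * h) + dsumZ K (2 * h) + dsumZ K h - dsumZ K (3 * h))
                       + K * (9 * h - 2 * h') * (K * K - 1))
            = 18 * C 6 + 54 * C 2 + 108 * C 1 + (-36) * C 3
              + K * K * ((1944 * h * h + 432) * (K - 1) - 144 * m * (K * K - 1))).
  { transitivity (18 * C 6 + 54 * C 2 + 108 * C 1 + (-36) * C 3
              + K * K * ((1944 * h * h + 432) * (K - 1)) - 144 * (h * h' + 1) * K * (K * K - 1)).
    - unfold C. rewrite Z.mul_1_l. ring.
    - rewrite Hm. ring. }
  rewrite E. repeat (apply Z.divide_add_r || apply Z.divide_sub_r).
  all: solve [apply Z.divide_factor_l
             | apply Z.divide_mul_r, dsumZ_congr, Z.mod_divide; [discriminate | reflexivity]].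
Qed.
Lemma second_quotient_congr_sq :
  (K * K | 9 * (dsumZ K (3 * h) + dsumZ K (2 * h) + dsumZ K h - 3 * dsumZ K (6 * h))
           - K * (9 * h + h') * (K * K - 1)).
Proof.
  apply (Gauss _ (72 * h)); [|exact rel_prime_sq_72h].
  destruct Hinv as [m Hm].
  set (C a := 12 * (a * h) * dsumZ K (a * h) - (1 + a * h * (a * h)) * K * (K - 1) * (2 * K - 1)).
  assert (E : 72 * h * (9 * (dsumZ K (3 * h) + dsumZ K (2 * h) + dsumZ K h - 3 * dsumZ K (6 * h))
                        - K * (9 * h + h') * (K * K - 1))
            = 18 * C 3 + 27 * C 2 + 54 * C 1 + (-27) * C 6
              + K * K * ((216 - 1944 * h * h) * (K - 1) - 72 * m * (K * K - 1))).
  { transitivity (18 * C 3 + 27 * C 2 + 54 * C 1 + (-27) * C 6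
              + K * K * ((216 - 1944 * h * h) * (K - 1)) - 72 * (h * h' + 1) * K * (K * K - 1)).
    - unfold C. rewrite Z.mul_1_l. ring.
    - rewrite Hm. ring. }
  rewrite E. repeat (apply Z.divide_add_r || apply Z.divide_sub_r).
  all: solve [apply Z.divide_factor_l
             | apply Z.divide_mul_r, dsumZ_congr, Z.mod_divide; [discriminate | reflexivity]].
Qed.

Lemma first_quotient_congr :
  (36 * K * K | 18 * (dsumZ K (6 * h) + dsumZ K (2 * h) + dsumZ K h - dsumZ K (3 * h))
                + K * (9 * h - 2 * h') * (K * K - 1)).
Proof.
  rewrite <- Z.mul_assoc. apply divide_mul_rel_prime;
    [| exact first_quotient_congr_sq | apply rel_prime_divisor36_sq, Z.divide_refl].
  pose proof (mod6_of_coprime6 K HK6) as HK6'.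
  destruct (divide24_sq_sub1 K HK6') as [j Hj], (dsumZ_parity K h HK6' Hh HK) as [e He],
    H6 as [t Ht].
  rewrite Hj, Ht. exists (e - dsumZ K (3 * h) + 6 * h * K * j - 8 * t * K * j). lia.
Qed.

Lemma second_quotient_congr :
  (18 * K * K | 9 * (dsumZ K (3 * h) + dsumZ K (2 * h) + dsumZ K h - 3 * dsumZ K (6 * h))
                - K * (9 * h + h') * (K * K - 1)).
Proof.
  rewrite <- Z.mul_assoc. apply divide_mul_rel_prime;
    [| exact second_quotient_congr_sq | apply rel_prime_divisor36_sq; exists 2; reflexivity].
  pose proof (mod6_of_coprime6 K HK6) as HK6'.
  destruct (divide24_sq_sub1 K HK6') as [j Hj], (dsumZ_parity K h HK6' Hh HK) as [e He],
    H6 as [t Ht].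
  rewrite Hj, Ht. exists (e - 2 * dsumZ K (6 * h) - 12 * h * K * j - 8 * t * K * j). lia.
Qed.

End Congruences.

Close Scope Z_scope.
Open Scope R_scope.

Lemma Rfloor_IZR_div n d : (0 < d)%Z -> Rfloor (IZR n / IZR d) = (n / d)%Z.
Proof.
  intros Hd. unfold Rfloor. symmetry. apply Int_part_spec.
  assert (Hq : (d * (n / d) <= n < d * (n / d) + d)%Z) by (Z.div_mod_to_equations; lia).
  destruct Hq as [Hlo Hhi]. apply IZR_le in Hlo. apply IZR_lt in Hhi.
  rewrite plus_IZR, mult_IZR in *.
  assert (HdR : 0 < IZR d) by (apply IZR_lt; lia).
  set (q := IZR (n / d)) in *.
  replace (IZR n / IZR d) with (q + (IZR n - IZR d * q) / IZR d) by (field; lra).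
  assert (0 <= (IZR n - IZR d * q) / IZR d < 1).
  { split; [apply Rdiv_le_0_compat; lra|].
    apply (Rmult_lt_reg_r (IZR d)); [lra|]. field_simplify; lra. }
  lra.
Qed.

Lemma fold_dedekind_summands (a : Z) (k : nat) (l : list nat) : (0 < k)%nat ->
  fold_right Rplus 0
    (map (fun r : nat =>
            (INR r / INR k) *
            (IZR a * INR r / INR k - IZR (Rfloor (IZR a * INR r / INR k)) - 1 / 2)) l)
  = IZR (sumZ (fun x => x * ((a * x) mod Z.of_nat k))%Z (map Z.of_nat l)) / INR k ^ 2
    - IZR (sumZ (fun x => x) (map Z.of_nat l)) / (2 * INR k).
Proof.
  intros Hk. assert (HkR : 0 < INR k) by (apply lt_0_INR; lia).
  induction l as [|r l IH]; cbn [map fold_right]; [simpl; field; lra|].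
  rewrite IH, sumZ_cons, sumZ_cons, !INR_IZR_INZ, <- mult_IZR, Rfloor_IZR_div, Z.mod_eq by lia.
  rewrite <- !INR_IZR_INZ, !plus_IZR, !mult_IZR, !minus_IZR, !mult_IZR, <- !INR_IZR_INZ.
  field. lra.
Qed.

Lemma dedekind_s_dsumZ (a : Z) (k : nat) : (0 < k)%nat ->
  dedekind_s a k = IZR (dsumZ (Z.of_nat k) a) / INR k ^ 2 - (INR k - 1) / 4.
Proof.
  intros Hk. assert (HkR : 0 < INR k) by (apply lt_0_INR; lia).
  unfold dedekind_s. rewrite fold_dedekind_summands by exact Hk.
  replace (map Z.of_nat (seq 1 (k - 1))) with (nonzero_residues (Z.of_nat k))
    by (unfold nonzero_residues; now rewrite Nat2Z.id).
  assert (Hsum : IZR (sumZ (fun x => x) (nonzero_residues (Z.of_nat k))) = (INR k - 1) * INR k / 2).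
  { pose proof (sum_nonzero_residues (Z.of_nat k) ltac:(lia)) as Hsum.
    apply (f_equal IZR) in Hsum.
    rewrite mult_IZR, mult_IZR, minus_IZR, <- INR_IZR_INZ in Hsum. lra. }
  unfold dsumZ. rewrite Hsum. field. lra.
Qed.

Lemma cexpi_add x y : Cmult (cexpi x) (cexpi y) = cexpi (x + y).
Proof. unfold cexpi, Cmult. simpl. rewrite cos_plus, sin_plus. f_equal; ring. Qed.

Lemma cexpi_sub x y : Cdiv (cexpi x) (cexpi y) = cexpi (x - y).
Proof.
  unfold Cdiv, cexpi, Cmult, Cinv. simpl. rewrite cos_minus, sin_minus.
  assert (E : cos y * (cos y * 1) + sin y * (sin y * 1) = 1)
    by (pose proof (sin2_cos2 y); unfold Rsqr in *; lra).
  rewrite E. f_equal; field.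
Qed.

Lemma cexpi_add_2PI_IZR x n : cexpi (x + 2 * PI * IZR n) = cexpi x.
Proof.
  assert (Hsin : sin (IZR n * PI) = 0) by (apply sin_eq_0_1; now exists n).
  replace (2 * PI * IZR n) with (2 * (IZR n * PI)) by ring.
  unfold cexpi. rewrite cos_plus, sin_plus, cos_2a_sin, sin_2a, Hsin. f_equal; ring.
Qed.

Lemma cexpi_eq_of_divide x y (m z : Z) : (m | z)%Z -> m <> 0%Z ->
  x - y = 2 * PI * IZR z / IZR m -> cexpi x = cexpi y.
Proof.
  intros [n ->] Hm Hxy. rewrite <- (cexpi_add_2PI_IZR y n). f_equal.
  rewrite mult_IZR in Hxy. apply not_0_IZR in Hm. field_simplify in Hxy; [|exact Hm]. lra.
Qed.

Theorem lemma3p7 (k : nat) (h h' : Z)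
  (hk6 : Z.gcd (Z.of_nat k) 6 = 1%Z)
  (hhk : Z.gcd h (Z.of_nat k) = 1%Z)
  (hinv : (Z.of_nat k | h * h' + 1)%Z)
  (h6 : (6 | h')%Z) :
  Cdiv (Cmult (Cmult (omega (6 * h) k) (omega (2 * h) k)) (omega h k))
       (omega (3 * h) k)
  = cexpi (- (2 * PI / (36 * INR k)) *
           (- 9 * INR k + 9 * INR k ^ 2 + IZR h * (- 9 + 9 * INR k ^ 2)
            + IZR h' * (2 - 2 * INR k ^ 2)))
  /\
  Cdiv (Cmult (Cmult (omega (3 * h) k) (omega (2 * h) k)) (omega h k))
       (Cmult (Cmult (omega (6 * h) k) (omega (6 * h) k)) (omega (6 * h) k))
  = cexpi ((2 * PI / (18 * INR k)) *
           (9 * IZR h * (INR k ^ 2 - 1) + IZR h' * (INR k ^ 2 - 1))).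
Proof.
  assert (Hk : (0 < k)%nat) by (destruct k; [discriminate hk6 | lia]).
  assert (HK : (0 < Z.of_nat k)%Z) by lia.
  assert (HkR : 0 < INR k) by (apply lt_0_INR, Hk).
  unfold omega. rewrite !cexpi_add, !cexpi_sub, !dedekind_s_dsumZ by exact Hk.
  split.
  - eapply cexpi_eq_of_divide; [exact (first_quotient_congr _ h h' HK hk6 hhk hinv h6) | nia |].
    repeat rewrite ?plus_IZR, ?minus_IZR, ?mult_IZR. rewrite <- INR_IZR_INZ. field. lra.
  - eapply cexpi_eq_of_divide; [exact (second_quotient_congr _ h h' HK hk6 hhk hinv h6) | nia |].
    repeat rewrite ?plus_IZR, ?minus_IZR, ?mult_IZR. rewrite <- INR_IZR_INZ. field. lra.
Qed.
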